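(* On a Klein bottle with a flat metric, two distinct closed geodesics without self-intersections cannot intersect in exactly three points. *)

From Stdlib Require Import Reals ZArith.
Open Scope R_scope.

(* Every flat Klein bottle is isometric to the quotient of the Euclidean
   plane by the group G(a,b) (a, b > 0) generated by the glide reflection
   (x,y) |-> (x + a, -y) and the translation (x,y) |-> (x, y + b).
   Its elements are exactly the maps kb_act a b m n, m n : Z. *)
Definition kb_act (a b : R) (m n : Z) (p : R * R) : R * R :=
  (fst p + IZR m * a,
   (if Z.even m then snd p else - snd p) + IZR n * b).

Definition kb_equiv (a b : R) (p q : R * R) : Prop :=
  exists m n : Z, q = kb_act a b m n p.

Definition line (p v : R * R) (t : R) : R * R :=
  (fst p + t * fst v, snd p + t * snd v).

(* The geodesic t |-> [line p v t] is a closed geodesic without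
   self-intersections: v <> 0 and there is a period T > 0 such that the
   curve is periodic of period T and injective on each period, i.e.
   it is an embedding of the circle R / T Z into the Klein bottle. *)
Definition simple_closed_geodesic (a b : R) (p v : R * R) : Prop :=
  v <> (0, 0) /\
  exists T : R, 0 < T /\
    forall s t : R,
      kb_equiv a b (line p v s) (line p v t) <->
      exists k : Z, t - s = IZR k * T.

Definition on_geodesic (a b : R) (p v q : R * R) : Prop :=
  exists t : R, kb_equiv a b (line p v t) q.

Definition distinct_geodesics (a b : R) (p1 v1 p2 v2 : R * R) : Prop :=
  exists q : R * R,
    ~ (on_geodesic a b p1 v1 q <-> on_geodesic a b p2 v2 q).

Definition meet_in_exactly_three (a b : R) (p1 v1 p2 v2 : R * R) : Prop :=
  exists q1 q2 q3 : R * R,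
    on_geodesic a b p1 v1 q1 /\ on_geodesic a b p2 v2 q1 /\
    on_geodesic a b p1 v1 q2 /\ on_geodesic a b p2 v2 q2 /\
    on_geodesic a b p1 v1 q3 /\ on_geodesic a b p2 v2 q3 /\
    ~ kb_equiv a b q1 q2 /\ ~ kb_equiv a b q1 q3 /\ ~ kb_equiv a b q2 q3 /\
    (forall q, on_geodesic a b p1 v1 q -> on_geodesic a b p2 v2 q ->
       kb_equiv a b q1 q \/ kb_equiv a b q2 q \/ kb_equiv a b q3 q).

(* A simple closed geodesic is parallel to an axis. If its velocity v had two
   nonzero components, the glide reflection would identify two of its points
   at parameter distance a / v1, so the deck transformation realising the
   period T would be an odd power of the glide; comparing that transformation
   at two points whose heights differ by b/4 gives b/2 in bZ. So each simple
   closed geodesic is the image of a horizontal line y = c or of a vertical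
   line x = d. Two images of the same kind that meet coincide, while y = c and
   x = d meet only in the classes of (d, c) and (d, -c): never in three points. *)
From Stdlib Require Import Reals ZArith Lra Lia.
Open Scope R_scope.

Section KleinBottle.

Variables a b : R.

Lemma kb_act_comp m n m' n' p : exists N,
  kb_act a b m n (kb_act a b m' n' p) = kb_act a b (m + m') N p.
Proof.
  destruct p as [x y]; unfold kb_act; cbn [fst snd].
  rewrite Z.even_add.
  destruct (Z.even m), (Z.even m'); simpl.
  - exists (n' + n)%Z; rewrite !plus_IZR; f_equal; ring.
  - exists (n' + n)%Z; rewrite !plus_IZR; f_equal; ring.
  - exists (n - n')%Z; rewrite plus_IZR, minus_IZR; f_equal; ring.
  - exists (n - n')%Z; rewrite plus_IZR, minus_IZR; f_equal; ring.
Qed.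

Lemma kb_act_inv m n p : exists N, kb_act a b (- m) N (kb_act a b m n p) = p.
Proof.
  destruct p as [x y]; unfold kb_act; cbn [fst snd].
  rewrite Z.even_opp.
  destruct (Z.even m); [exists (- n)%Z | exists n]; rewrite ?opp_IZR; f_equal; ring.
Qed.

Lemma kb_equiv_sym p q : kb_equiv a b p q -> kb_equiv a b q p.
Proof.
  intros [m [n H]]. destruct (kb_act_inv m n p) as [N HN].
  exists (- m)%Z, N. rewrite H, HN. reflexivity.
Qed.

Lemma kb_equiv_trans p q r :
  kb_equiv a b p q -> kb_equiv a b q r -> kb_equiv a b p r.
Proof.
  intros [m [n H]] [m' [n' H']]. destruct (kb_act_comp m' n' m n p) as [N HN].
  exists (m' + m)%Z, N. rewrite H', H, HN. reflexivity.
Qed.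

Lemma kb_equiv_pigeonhole A B q1 q2 q3 :
  (kb_equiv a b A q1 \/ kb_equiv a b B q1) ->
  (kb_equiv a b A q2 \/ kb_equiv a b B q2) ->
  (kb_equiv a b A q3 \/ kb_equiv a b B q3) ->
  ~ kb_equiv a b q1 q2 -> ~ kb_equiv a b q1 q3 -> ~ kb_equiv a b q2 q3 -> False.
Proof.
  intros [h1|h1] [h2|h2] [h3|h3] n12 n13 n23;
  first [ apply n12; apply (kb_equiv_trans _ _ _ (kb_equiv_sym _ _ h1) h2)
        | apply n13; apply (kb_equiv_trans _ _ _ (kb_equiv_sym _ _ h1) h3)
        | apply n23; apply (kb_equiv_trans _ _ _ (kb_equiv_sym _ _ h2) h3) ].
Qed.

Lemma line_translate_fst p v s T m n :
  kb_act a b m n (line p v s) = line p v (s + T) -> T * fst v = IZR m * a.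
Proof.
  unfold kb_act, line; cbn [fst snd]. intros E. injection E as E1 _. lra.
Qed.

Lemma line_translate_snd_glide p v s T m n :
  Z.even m = false -> kb_act a b m n (line p v s) = line p v (s + T) ->
  2 * (snd p + s * snd v) + T * snd v = IZR n * b.
Proof.
  unfold kb_act, line; cbn [fst snd]. intros Hm E. rewrite Hm in E.
  injection E as _ E2. lra.
Qed.

Lemma two_IZR_neq_1 z : 2 * IZR z <> 1.
Proof.
  intro H. assert (Hz : (2 * z = 1)%Z) by (apply eq_IZR; rewrite mult_IZR; exact H).
  lia.
Qed.

(* The glide reflection identifies the parameters s and s + a / v1 below,
   so a / v1 is a multiple k T of the period and k m = 1. *)
Lemma closed_oblique_line_translate_odd p v T m :
  0 < a -> fst v <> 0 -> snd v <> 0 ->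
  (forall s t, kb_equiv a b (line p v s) (line p v t) ->
     exists k : Z, t - s = IZR k * T) ->
  T * fst v = IZR m * a -> Z.even m = false.
Proof.
  destruct p as [x y], v as [v1 v2]; cbn [fst snd].
  intros Ha Hv1 Hv2 Hper HTm.
  set (s := (- (a / v1) - 2 * y / v2) / 2).
  set (t := (a / v1 - 2 * y / v2) / 2).
  assert (Hglide : kb_equiv a b (line (x, y) (v1, v2) s) (line (x, y) (v1, v2) t)).
  { exists 1%Z, 0%Z. unfold line, kb_act, s, t; cbn [fst snd Z.even].
    f_equal; field; auto. }
  destruct (Hper s t Hglide) as [k Hk].
  assert (Hkm : (k * m = 1)%Z).
  { apply eq_IZR. rewrite mult_IZR. apply (Rmult_eq_reg_r a); [|lra].
    rewrite Rmult_assoc, <- HTm, <- Rmult_assoc, <- Hk.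
    unfold s, t. field. auto. }
  apply (f_equal Z.even) in Hkm. rewrite Z.even_mul in Hkm.
  apply Bool.orb_false_iff in Hkm. apply Hkm.
Qed.

Lemma simple_closed_geodesic_axis_parallel p v :
  0 < a -> 0 < b -> simple_closed_geodesic a b p v ->
  fst v = 0 \/ snd v = 0.
Proof.
  intros Ha Hb [_ [T [_ Hs]]].
  destruct (Req_dec (fst v) 0) as [h1|h1]; [now left|].
  destruct (Req_dec (snd v) 0) as [h2|h2]; [now right|].
  exfalso.
  assert (Hshift : forall s, kb_equiv a b (line p v s) (line p v (s + T))).
  { intro s. apply Hs. exists 1%Z. ring. }
  destruct (Hshift 0) as [m0 [n0 E0]].
  set (s1 := b / (4 * snd v)).
  destruct (Hshift s1) as [m1 [n1 E1]].
  symmetry in E0, E1.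
  assert (Hm0 : Z.even m0 = false).
  { apply (closed_oblique_line_translate_odd p v T); auto.
    - intros s t. apply Hs.
    - exact (line_translate_fst _ _ _ _ _ _ E0). }
  assert (Hm : m1 = m0).
  { apply eq_IZR, (Rmult_eq_reg_r a); [|lra].
    rewrite <- (line_translate_fst _ _ _ _ _ _ E0).
    exact (eq_sym (line_translate_fst _ _ _ _ _ _ E1)). }
  subst m1.
  pose proof (line_translate_snd_glide _ _ _ _ _ _ Hm0 E0) as H0.
  pose proof (line_translate_snd_glide _ _ _ _ _ _ Hm0 E1) as H1.
  assert (Hs1 : s1 * snd v = b / 4) by (unfold s1; field; auto).
  apply (two_IZR_neq_1 (n1 - n0)), (Rmult_eq_reg_r b); [|lra].
  rewrite minus_IZR. lra.
Qed.

Definition kb_horizontal (c : R) (q : R * R) : Prop :=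
  exists u, kb_equiv a b (u, c) q.

Definition kb_vertical (d : R) (q : R * R) : Prop :=
  exists w, kb_equiv a b (d, w) q.

Lemma on_geodesic_horizontal x c al q :
  al <> 0 -> on_geodesic a b (x, c) (al, 0) q <-> kb_horizontal c q.
Proof.
  intros Hal; split.
  - intros [t Ht]. exists (x + t * al).
    unfold line in Ht; cbn [fst snd] in Ht. rewrite Rmult_0_r, Rplus_0_r in Ht.
    exact Ht.
  - intros [u Hu]. exists ((u - x) / al).
    replace (line (x, c) (al, 0) ((u - x) / al)) with (u, c); [exact Hu|].
    unfold line; cbn [fst snd]. f_equal; field; exact Hal.
Qed.

Lemma on_geodesic_vertical d y be q :
  be <> 0 -> on_geodesic a b (d, y) (0, be) q <-> kb_vertical d q.
Proof.
  intros Hbe; split.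
  - intros [t Ht]. exists (y + t * be).
    unfold line in Ht; cbn [fst snd] in Ht. rewrite Rmult_0_r, Rplus_0_r in Ht.
    exact Ht.
  - intros [w Hw]. exists ((w - y) / be).
    replace (line (d, y) (0, be) ((w - y) / be)) with (d, w); [exact Hw|].
    unfold line; cbn [fst snd]. f_equal; field; exact Hbe.
Qed.

Lemma simple_closed_geodesic_image p v :
  0 < a -> 0 < b -> simple_closed_geodesic a b p v ->
  (forall q, on_geodesic a b p v q <-> kb_horizontal (snd p) q) \/
  (forall q, on_geodesic a b p v q <-> kb_vertical (fst p) q).
Proof.
  intros Ha Hb Hsc.
  destruct (simple_closed_geodesic_axis_parallel p v Ha Hb Hsc) as [Hv|Hv];
    destruct Hsc as [Hv0 _]; destruct p as [x y], v as [v1 v2];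
    cbn [fst snd] in *; subst.
  - right. intro q. apply on_geodesic_vertical.
    intros ->. apply Hv0. reflexivity.
  - left. intro q. apply on_geodesic_horizontal.
    intros ->. apply Hv0. reflexivity.
Qed.

Lemma kb_horizontal_trans c c' q q' :
  kb_horizontal c q -> kb_horizontal c' q -> kb_horizontal c q' -> kb_horizontal c' q'.
Proof.
  intros [u Hu] [u' Hu'] [w Hw].
  destruct (kb_equiv_trans _ _ _ Hu (kb_equiv_sym _ _ Hu')) as [m [n E]].
  exists (w + IZR m * a). apply (kb_equiv_trans _ (w, c)); [|exact Hw].
  apply kb_equiv_sym. exists m, n.
  unfold kb_act in *; cbn [fst snd] in *. injection E as _ E2. now rewrite E2.
Qed.

Lemma kb_vertical_trans d d' q q' :
  kb_vertical d q -> kb_vertical d' q -> kb_vertical d q' -> kb_vertical d' q'.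
Proof.
  intros [w Hw] [w' Hw'] [z Hz].
  destruct (kb_equiv_trans _ _ _ Hw (kb_equiv_sym _ _ Hw')) as [m [n E]].
  exists (snd (kb_act a b m n (d, z))). apply (kb_equiv_trans _ (d, z)); [|exact Hz].
  apply kb_equiv_sym. exists m, n.
  unfold kb_act in *; cbn [fst snd] in *. injection E as E1 _. now rewrite E1.
Qed.

Lemma kb_horizontal_vertical_meet c d q :
  kb_horizontal c q -> kb_vertical d q ->
  kb_equiv a b (d, c) q \/ kb_equiv a b (d, - c) q.
Proof.
  intros [u [m [n E]]] [w [m' [n' E']]]. destruct q as [q1 q2].
  unfold kb_act in E, E'; cbn [fst snd] in E, E'.
  injection E as E1 E2. injection E' as E1' E2'.
  destruct (Z.even m), (Z.even m') eqn:Hm';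
    [left | right | right | left]; exists m', n;
    unfold kb_act; cbn [fst snd]; rewrite Hm'; f_equal; lra.
Qed.

End KleinBottle.

Theorem mainTheorem9 (a b : R) (p1 v1 p2 v2 : R * R) :
  0 < a -> 0 < b ->
  simple_closed_geodesic a b p1 v1 ->
  simple_closed_geodesic a b p2 v2 ->
  distinct_geodesics a b p1 v1 p2 v2 ->
  ~ meet_in_exactly_three a b p1 v1 p2 v2.
Proof.
  intros Ha Hb H1 H2 [q Hq]
    [q1 [q2 [q3 [H11 [H12 [H21 [H22 [H31 [H32 [N12 [N13 [N23 _]]]]]]]]]]]].
  destruct (simple_closed_geodesic_image _ _ _ _ Ha Hb H1) as [I1|I1],
    (simple_closed_geodesic_image _ _ _ _ Ha Hb H2) as [I2|I2];
    rewrite I1 in Hq, H11, H21, H31; rewrite I2 in Hq, H12, H22, H32.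
  - apply Hq. split; apply kb_horizontal_trans with q1; assumption.
  - apply (kb_equiv_pigeonhole a b (fst p2, snd p1) (fst p2, - snd p1) q1 q2 q3);
      auto using kb_horizontal_vertical_meet.
  - apply (kb_equiv_pigeonhole a b (fst p1, snd p2) (fst p1, - snd p2) q1 q2 q3);
      auto using kb_horizontal_vertical_meet.
  - apply Hq. split; apply kb_vertical_trans with q1; assumption.
Qed.
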